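(* Let $T:\mathbb{Z}\to\mathbb{Z}$ be defined by $T(n)=n/2$ if $n$ is even and $T(n)=(3n+1)/2$ if $n$ is odd. For every nonzero integer $n$, the $T$-trajectory $(T^k(n))_{k\ge 0}$ has the following structure: there is $K\ge 0$ such that $T^k(n)\equiv 0\pmod 3$ for $0\le k<K$, and for $k\ge K$ every term $T^k(n)$ is congruent to $2$ or $8\pmod 9$ except for isolated terms (no two in succession) that are congruent to $1\pmod 3$ and isolated terms (no two in succession) that are congruent to $5\pmod 9$; that is, for all $k\ge K$, $T^k(n)\not\equiv 0\pmod 3$, it is not the case that $T^k(n)\equiv T^{k+1}(n)\equiv 1\pmod 3$, and it is not the case that $T^k(n)\equiv T^{k+1}(n)\equiv 5\pmod 9$.
   Context: $T^0(n)=n$, $T^{k+1}(n)=T(T^k(n))$. *)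

From Stdlib Require Import ZArith.
Open Scope Z_scope.

(* The 3x+1 map T : Z -> Z, T(n) = n/2 (n even), (3n+1)/2 (n odd).
   In both cases the division is exact, so Z.div is the true quotient. *)
Definition T (n : Z) : Z :=
  if Z.even n then n / 2 else (3 * n + 1) / 2.

Definition Titer (k : nat) (n : Z) : Z := Nat.iter k T n.

(** Since [2 T(x)] is [x] or [3x + 1], it is congruent to [x] or to [1]
    modulo 3; hence a non-multiple of 3 is mapped to a non-multiple of 3,
    and the remaining two conditions are one-step checks of residues modulo 3
    and 9. A nonzero multiple of 3 is halved while it is even, which keeps it
    a multiple of 3 but strictly decreases its absolute value, and once it is
    odd, [2 T(x) = 3x + 1] is not a multiple of 3: so the trajectory leaves
    the multiples of 3 after finitely many steps and never returns. *)

From Stdlib Require Import ZArith Lia.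
Open Scope Z_scope.

Ltac mod_lia := Z.to_euclidean_division_equations; lia.

Lemma T_double (x : Z) : 2 * T x = if Z.even x then x else 3 * x + 1.
Proof.
  unfold T; destruct (Z.even x) eqn:Hx.
  - apply Z.even_spec in Hx as [q ->]; mod_lia.
  - assert (Hodd : Z.odd x = true) by now rewrite <- Z.negb_even, Hx.
    apply Z.odd_spec in Hodd as [q ->]; mod_lia.
Qed.

Lemma T_mod3_neq0 (x : Z) : x mod 3 <> 0 -> T x mod 3 <> 0.
Proof. pose proof (T_double x); destruct (Z.even x); mod_lia. Qed.

Lemma T_mod3_eq1 (x : Z) : x mod 3 = 1 -> T x mod 3 <> 1.
Proof. pose proof (T_double x); destruct (Z.even x); mod_lia. Qed.

Lemma T_mod9_eq5 (x : Z) : x mod 9 = 5 -> T x mod 9 <> 5.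
Proof. pose proof (T_double x); destruct (Z.even x); mod_lia. Qed.

Lemma T_odd_mod3_neq0 (x : Z) : Z.even x = false -> T x mod 3 <> 0.
Proof. pose proof (T_double x) as Hx; intros He; rewrite He in Hx; mod_lia. Qed.

Lemma T_even_abs_lt (x : Z) : Z.even x = true -> x <> 0 -> Z.abs (T x) < Z.abs x.
Proof. pose proof (T_double x) as Hx; intros He; rewrite He in Hx; lia. Qed.

Lemma Titer_mod3_neq0 (k : nat) (x : Z) : x mod 3 <> 0 -> Titer k x mod 3 <> 0.
Proof.
  intros Hx; induction k as [|k IHk]; [exact Hx|].
  exact (T_mod3_neq0 _ IHk).
Qed.

Definition mod9_pattern (x y : Z) : Prop :=
  x mod 3 <> 0 /\ ~ (x mod 3 = 1 /\ y mod 3 = 1) /\ ~ (x mod 9 = 5 /\ y mod 9 = 5).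

Lemma Titer_mod9_pattern (k : nat) (x : Z) :
  x mod 3 <> 0 -> mod9_pattern (Titer k x) (Titer (S k) x).
Proof.
  intros Hx; pose proof (Titer_mod3_neq0 k x Hx) as Hk.
  split; [exact Hk|]; split; intros [H1 H2].
  - exact (T_mod3_eq1 _ H1 H2).
  - exact (T_mod9_eq5 _ H1 H2).
Qed.

Lemma Titer_succ_r (k : nat) (x : Z) : Titer (S k) x = Titer k (T x).
Proof. apply Nat.iter_succ_r. Qed.

Lemma trajectory_mod3_structure (x : Z) : x <> 0 ->
  exists K : nat,
    (forall k, (k < K)%nat -> Titer k x mod 3 = 0) /\
    (forall k, (K <= k)%nat -> mod9_pattern (Titer k x) (Titer (S k) x)).
Proof.
  induction x as [x IH] using (well_founded_induction (Wf_nat.well_founded_ltof Z Z.abs_nat)).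
  intros Hx.
  destruct (Z.eq_dec (x mod 3) 0) as [H3|H3].
  2: exists 0%nat; split; [lia|]; intros k _; exact (Titer_mod9_pattern k x H3).
  destruct (Z.even x) eqn:He.
  - assert (HTx : T x <> 0) by (pose proof (T_double x); rewrite He in *; lia).
    assert (Hlt : Wf_nat.ltof Z Z.abs_nat (T x) x)
      by (pose proof (T_even_abs_lt x He Hx); unfold Wf_nat.ltof; lia).
    destruct (IH (T x) Hlt HTx) as [K [Hpre Hpost]].
    exists (S K); split; intros [|k] Hk; try lia.
    + exact H3.
    + rewrite Titer_succ_r; apply Hpre; lia.
    + rewrite (Titer_succ_r k x), (Titer_succ_r (S k) x); apply Hpost; lia.
  - exists 1%nat; split; intros [|k] Hk; try lia.
    + exact H3.
    + rewrite (Titer_succ_r k x), (Titer_succ_r (S k) x).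
      exact (Titer_mod9_pattern k (T x) (T_odd_mod3_neq0 x He)).
Qed.

Theorem theorem4 : forall n : Z, n <> 0 ->
  exists K : nat,
    (forall k : nat, (k < K)%nat -> Titer k n mod 3 = 0) /\
    (forall k : nat, (K <= k)%nat ->
       Titer k n mod 3 <> 0 /\
       ~ (Titer k n mod 3 = 1 /\ Titer (S k) n mod 3 = 1) /\
       ~ (Titer k n mod 9 = 5 /\ Titer (S k) n mod 9 = 5)).
Proof. exact trajectory_mod3_structure. Qed.
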